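(* In any execution of Algorithm $\mathsf{AG}$ (described in the context) with a guild, every process in the maximal guild sends a $\mathrm{DistributeT}$ message.
   Context: System model: a finite set $\mathcal{P}=\{p_1,\dots,p_n\}$ of processes communicating asynchronously over authenticated point-to-point links; every message sent from a correct process to a correct process is eventually delivered. A process that follows its protocol is correct; others (faulty, Byzantine) may behave arbitrarily. $F\subseteq\mathcal{P}$ denotes the (unknown) set of faulty processes of an execution. For $\mathcal{A}\subseteq 2^{\mathcal{P}}$, write $\mathcal{A}^*=\{A' : A'\subseteq A,\ A\in\mathcal{A}\}$. An asymmetric fail-prone system is an array $\mathbb{F}=[\mathcal{F}_1,\dots,\mathcal{F}_n]$ with $\mathcal{F}_i\subseteq 2^{\mathcal{P}}$. An asymmetric Byzantine quorum system for $\mathbb{F}$ is an array $\mathbb{Q}=[\mathcal{Q}_1,\dots,\mathcal{Q}_n]$ with $\mathcal{Q}_i\subseteq 2^{\mathcal{P}}$ (quorums for $p_i$) satisfying: (consistency) for all $i,j$, all $Q_i\in\mathcal{Q}_i$, $Q_j\in\mathcal{Q}_j$, $F_{ij}\in\mathcal{F}_i^*\cap\mathcal{F}_j^*$: $Q_i\cap Q_j\not\subseteq F_{ij}$; (availability) for all $i$ and $F_i\in\mathcal{F}_i$ there is $Q_i\in\mathcal{Q}_i$ with $F_i\cap Q_i=\emptyset$. A kernel for $p_i$ is a set $K\subseteq\mathcal{P}$ intersecting every $Q\in\mathcal{Q}_i$; $\mathcal{K}_i$ is the set of kernels for $p_i$. A correct process $p_i$ is wise if $F\in\mathcal{F}_i^*$.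 A guild is a set $\mathcal{G}$ of wise processes such that every $p_i\in\mathcal{G}$ has some $Q_i\in\mathcal{Q}_i$ with $Q_i\subseteq\mathcal{G}$. An execution with a guild is one in which a nonempty guild exists; the maximal guild $\mathcal{G}_{max}$ is the union of all guilds. Asymmetric reliable broadcast (arb-broadcast / arb-deliver) guarantees, in every execution with a guild: if a correct process arb-broadcasts $m$, every process of $\mathcal{G}_{max}$ eventually arb-delivers $m$; for each sender, all processes of $\mathcal{G}_{max}$ that arb-deliver from it deliver the same message; if some process of $\mathcal{G}_{max}$ arb-delivers a message from a sender, all processes of $\mathcal{G}_{max}$ eventually arb-deliver a message from that sender; a correct process arb-delivers at most one message per sender, and from a correct sender only a message it arb-broadcast. Algorithm $\mathsf{AG}$ (code of $p_i$; each correct process invokes ag-propose$(x_i)$ exactly once; each guarded ''upon there being ...'' action executes at most once, message handlers once per message). State: sets $S_i,T_i,U_i$ initially empty, boolean $sentT$ initially false. (1) Upon ag-propose$(x_i)$: arb-broadcast $(p_i,x_i)$. (2) Upon arb-delivering $(p_j,x_j)$ from $p_j$: $S_i\gets S_i\cup\{(p_j,x_j)\}$. (3) Upon there being $Q\in\mathcal{Q}_i$ such that for every $p_j\in Q$ some pair $(p_j,\cdot)\in S_i$: send $\langle\mathrm{DistributeS},p_i,S_i\rangle$ to all. (4) For a received $\langle\mathrm{DistributeS},p_j,S_j\rangle$: once $S_j\subseteq S_i$, provided $sentT$ is false at that moment, set $T_i\gets T_i\cup S_j$ and send $\langle\mathrm{Ack},p_i\rangle$ to $p_j$. (5) Upon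 Ack received from every member of some $Q\in\mathcal{Q}_i$: send Ready to all. (6) Upon Ready received from every member of some $Q\in\mathcal{Q}_i$: send Confirm to all. (7) Upon Confirm received from every member of some $K\in\mathcal{K}_i$: send Confirm to all. (8) Upon Confirm received from every member of some $Q\in\mathcal{Q}_i$: send $\langle\mathrm{DistributeT},p_i,T_i\rangle$ to all and set $sentT\gets$ true. (9) For a received $\langle\mathrm{DistributeT},p_j,T_j\rangle$ from $p_j$: once $T_j\subseteq S_i$, set $U_i\gets U_i\cup T_j$. (10) Upon DistributeT received from every member of some $Q\in\mathcal{Q}_i$: ag-deliver$(U_i)$. *)

From Stdlib Require Import List.
From mathcomp Require Import all_boot.
Set Implicit Arguments. Unset Strict Implicit. Unset Printing Implicit Defensive.

Section AsymQuorums.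
Variable P : finType.

Definition in_star (A : {set {set P}}) (X : {set P}) : bool :=
  [exists B in A, X \subset B].

Definition abqs (Fp Qs : P -> {set {set P}}) : Prop :=
  (forall (i j : P) (Qi Qj Fij : {set P}),
      Qi \in Qs i -> Qj \in Qs j -> in_star (Fp i) Fij -> in_star (Fp j) Fij ->
      ~~ (Qi :&: Qj \subset Fij)) /\
  (forall (i : P) (Fi : {set P}), Fi \in Fp i ->
      exists2 Qi, Qi \in Qs i & [disjoint Fi & Qi]).

Definition quorum_in (Qi : {set {set P}}) (X : {set P}) : bool :=
  [exists Q in Qi, Q \subset X].

Definition is_kernel (Qi : {set {set P}}) (K : {set P}) : bool :=
  [forall Q in Qi, K :&: Q != set0].

Definition kernel_in (Qi : {set {set P}}) (X : {set P}) : bool :=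
  [exists K : {set P}, is_kernel Qi K && (K \subset X)].

Variables (Fp Qs : P -> {set {set P}}) (F : {set P}).

Definition wise (i : P) : Prop := i \notin F /\ in_star (Fp i) F.

Definition guild (G : {set P}) : Prop :=
  forall i, i \in G -> wise i /\ quorum_in (Qs i) G.

Definition in_Gmax (i : P) : Prop := exists G, guild G /\ i \in G.

Definition has_guild : Prop := exists G, guild G /\ G != set0.
End AsymQuorums.

Section Algorithm.
Variables (P : finType) (V : eqType).

(* finite sets of pairs (p_j, x_j), represented by sequences (membership) *)
Definition pset := seq (P * V).

(* point-to-point messages; the process identifier field is the (authenticated)
   sender of the message *)
Inductive msg :=
  | MDS of pset        (* <DistributeS, p_j, S_j> *)
  | MAck
  | MReady
  | MConfirm
  | MDT of pset.       (* <DistributeT, p_j, T_j> *)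

(* guarded actions; A4 j t0 / A9 j t0 handle the DistributeS / DistributeT
   message received from j that j sent at time t0 *)
Inductive act := A3 | A4 of P & nat | A5 | A6 | A7 | A8 | A9 of P & nat | A10.

Inductive event :=
  | EPropose of P                    (* ag-propose(x_i) by p_i: arb-broadcast (p_i,x_i) *)
  | EArbDel of P & P & (P * V)       (* EArbDel i j m : p_i arb-delivers m from p_j *)
  | ERecv of P & P & nat & msg       (* ERecv i j t0 m : p_i receives m from p_j, sent at t0 *)
  | EAct of P & act
  | ESkip.

Definition ev_proc (e : event) : option P :=
  match e with
  | EPropose i | EArbDel i _ _ | ERecv i _ _ _ | EAct i _ => Some i
  | ESkip => None
  end.

Record lstate := LState {
  proposed : bool;
  Sset : pset; Tset : pset; Uset : pset;
  sentT : bool;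
  done3 : bool; done5 : bool; done6 : bool; done7 : bool;
  delivered : option pset;
  pendDS : seq (P * nat * pset);
  pendDT : seq (P * nat * pset);
  ackFrom : {set P}; readyFrom : {set P}; confFrom : {set P}; dtFrom : {set P}
}.

Definition init_state : lstate :=
  LState false [::] [::] [::] false false false false false None [::] [::]
         set0 set0 set0 set0.

Definition hasS (j : P) (S : pset) : bool := has (fun p => p.1 == j) S.
Definition subseteq (A B : pset) : bool := all (fun p => p \in B) A.

Definition find_pend (j : P) (t0 : nat) (pd : seq (P * nat * pset)) : option pset :=
  ohead [seq e.2 | e <- pd & e.1 == (j, t0)].
Definition rem_pend (j : P) (t0 : nat) (pd : seq (P * nat * pset)) :=
  [seq e <- pd | e.1 != (j, t0)].

Definition bcast (m : msg) : seq (P * msg) := [seq (k, m) | k <- enum P].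

Definition enabled (Qi : {set {set P}}) (s : lstate) (a : act) : bool :=
  match a with
  | A3 => ~~ done3 s && [exists Q in Qi, [forall j in Q, hasS j (Sset s)]]
  | A4 j t0 => if find_pend j t0 (pendDS s) is Some Sj then subseteq Sj (Sset s) else false
  | A5 => ~~ done5 s && quorum_in Qi (ackFrom s)
  | A6 => ~~ done6 s && quorum_in Qi (readyFrom s)
  | A7 => ~~ done7 s && kernel_in Qi (confFrom s)
  | A8 => ~~ sentT s && quorum_in Qi (confFrom s)
  | A9 j t0 => if find_pend j t0 (pendDT s) is Some Tj then subseteq Tj (Sset s) else false
  | A10 => (delivered s == None) && quorum_in Qi (dtFrom s)
  end.

Definition step (s : lstate) (e : event) : lstate * seq (P * msg) :=
  let: LState pr S0 T0 U0 sT d3 d5 d6 d7 dl pDS pDT aF rF cF dF := s in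
  match e with
  | EPropose _ => (LState true S0 T0 U0 sT d3 d5 d6 d7 dl pDS pDT aF rF cF dF, [::])
  | EArbDel _ _ m => (LState pr (m :: S0) T0 U0 sT d3 d5 d6 d7 dl pDS pDT aF rF cF dF, [::])
  | ERecv _ j t0 m =>
      match m with
      | MDS Sj => (LState pr S0 T0 U0 sT d3 d5 d6 d7 dl ((j, t0, Sj) :: pDS) pDT aF rF cF dF, [::])
      | MAck => (LState pr S0 T0 U0 sT d3 d5 d6 d7 dl pDS pDT (j |: aF) rF cF dF, [::])
      | MReady => (LState pr S0 T0 U0 sT d3 d5 d6 d7 dl pDS pDT aF (j |: rF) cF dF, [::])
      | MConfirm => (LState pr S0 T0 U0 sT d3 d5 d6 d7 dl pDS pDT aF rF (j |: cF) dF, [::])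
      | MDT Tj => (LState pr S0 T0 U0 sT d3 d5 d6 d7 dl pDS ((j, t0, Tj) :: pDT) aF rF cF (j |: dF), [::])
      end
  | EAct _ a =>
      match a with
      | A3 => (LState pr S0 T0 U0 sT true d5 d6 d7 dl pDS pDT aF rF cF dF, bcast (MDS S0))
      | A4 j t0 =>
          let Sj := odflt [::] (find_pend j t0 pDS) in
          if ~~ sT then
            (LState pr S0 (Sj ++ T0) U0 sT d3 d5 d6 d7 dl (rem_pend j t0 pDS) pDT aF rF cF dF,
             [:: (j, MAck)])
          else (LState pr S0 T0 U0 sT d3 d5 d6 d7 dl (rem_pend j t0 pDS) pDT aF rF cF dF, [::])
      | A5 => (LState pr S0 T0 U0 sT d3 true d6 d7 dl pDS pDT aF rF cF dF, bcast MReady)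
      | A6 => (LState pr S0 T0 U0 sT d3 d5 true d7 dl pDS pDT aF rF cF dF, bcast MConfirm)
      | A7 => (LState pr S0 T0 U0 sT d3 d5 d6 true dl pDS pDT aF rF cF dF, bcast MConfirm)
      | A8 => (LState pr S0 T0 U0 true d3 d5 d6 d7 dl pDS pDT aF rF cF dF, bcast (MDT T0))
      | A9 j t0 =>
          let Tj := odflt [::] (find_pend j t0 pDT) in
          (LState pr S0 T0 (Tj ++ U0) sT d3 d5 d6 d7 dl pDS (rem_pend j t0 pDT) aF rF cF dF, [::])
      | A10 => (LState pr S0 T0 U0 sT d3 d5 d6 d7 (Some U0) pDS pDT aF rF cF dF, [::])
      end
  | ESkip => (s, [::])
  end.

Section Execution.
Variables (Fp Qs : P -> {set {set P}}) (F : {set P}) (x : P -> V)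
          (ev : nat -> event) (cfg : nat -> P -> lstate).

Definition correct (i : P) : Prop := i \notin F.

Definition out (t : nat) (i : P) : seq (P * msg) :=
  if ev_proc (ev t) == Some i then (step (cfg t i) (ev t)).2 else [::].

Definition allowed (t : nat) (i : P) : Prop :=
  match ev t with
  | EPropose _ => ~~ proposed (cfg t i)
  | EAct _ a => enabled (Qs i) (cfg t i) a
  | ERecv _ j t0 m => j \in F \/ (t0 < t /\ In (i, m) (out t0 j))
  | _ => True
  end.

Definition arb_bcast (t : nat) (j : P) (m : P * V) : Prop :=
  ev t = EPropose j /\ m = (j, x j).
Definition arb_del (t : nat) (i j : P) (m : P * V) : Prop := ev t = EArbDel i j m.

Definition arb_spec : Prop :=
  (forall t j m i, correct j -> arb_bcast t j m -> in_Gmax Fp Qs F i ->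
      exists t', arb_del t' i j m) /\
  (forall t t' i k j m m', in_Gmax Fp Qs F i -> in_Gmax Fp Qs F k ->
      arb_del t i j m -> arb_del t' k j m' -> m = m') /\
  (forall t i j m k, in_Gmax Fp Qs F i -> arb_del t i j m -> in_Gmax Fp Qs F k ->
      exists t' m', arb_del t' k j m') /\
  (forall t t' i j m m', correct i -> arb_del t i j m -> arb_del t' i j m' -> t = t') /\
  (forall t i j m, correct i -> correct j -> arb_del t i j m ->
      exists t', arb_bcast t' j m).

Record AG_execution : Prop := {
  ex_init : forall i, correct i -> cfg 0 i = init_state;
  ex_step : forall t i, correct i -> ev_proc (ev t) = Some i ->
              allowed t i /\ cfg t.+1 i = (step (cfg t i) (ev t)).1;
  ex_idle : forall t i, correct i -> ev_proc (ev t) <> Some i -> cfg t.+1 i = cfg t i;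
  ex_nodup : forall t t' i j t0 m, correct i ->
              ev t = ERecv i j t0 m -> ev t' = ERecv i j t0 m -> t = t';
  ex_net : forall t0 j k m, correct j -> correct k -> In (k, m) (out t0 j) ->
              exists t, ev t = ERecv k j t0 m;
  (* every correct process invokes ag-propose (at most once by the guard) *)
  ex_propose : forall i, correct i -> exists t, ev t = EPropose i;
  ex_fair : forall t i a, correct i -> enabled (Qs i) (cfg t i) a ->
              exists2 t', t <= t' & ev t' = EAct i a;
  ex_arb : has_guild Fp Qs F -> arb_spec
}.

End Execution.
End Algorithm.

(* A member of the maximal guild G sends DistributeT as soon as it holds Confirm messages from
   one of its quorums, and it has a quorum inside G; so it suffices that every member of G
   broadcasts Confirm.  If some member p of G has sent DistributeT, it held Confirm
   from a quorum Q_p; for every j in G the correct part of Q_p meets every quorum of j (quorum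
   consistency, both p and j being wise), so j amplifies Confirm through the kernel rule.
   Otherwise no member of G ever sets sentT, so each one acknowledges the DistributeS of every
   member of G once reliable broadcast has delivered its contents (totality and agreement);
   then every member of G gathers Acks, then Readies, from a quorum inside G and sends Confirm. *)

From Pilot Require Import Defs.
From Stdlib Require Import List Classical.
From mathcomp Require Import all_boot.
Set Implicit Arguments. Unset Strict Implicit. Unset Printing Implicit Defensive.

Lemma In_of_mem (T : eqType) (y : T) (s : seq T) : y \in s -> In y s.
Proof. by elim: s => //= a s IH; rewrite inE => /orP [/eqP->|/IH]; auto. Qed.

Lemma eventually_all (T : eqType) (f : nat -> T -> Prop) (s : seq T) :
  (forall t t' y, t <= t' -> f t y -> f t' y) ->
  (forall y, y \in s -> exists t, f t y) -> exists t, forall y, y \in s -> f t y.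
Proof.
move=> f_mono; elim: s => [|a s IH] fs; first by exists 0.
have [ta fa] := fs a (mem_head _ _).
have [ts fts] : exists t, forall y, y \in s -> f t y.
  by apply: IH => y ys; apply: fs; rewrite inE ys orbT.
exists (maxn ta ts) => y; rewrite inE => /orP [/eqP->|ys].
  by apply: f_mono fa; rewrite leq_maxl.
by apply: (f_mono ts); [rewrite leq_maxr | apply: fts].
Qed.

Section MaximalGuild.
Variables (P : finType) (Fp Qs : P -> {set {set P}}) (F : {set P}).

Lemma quorum_diff_faulty_kernel p j Qp : abqs Fp Qs ->
  in_star (Fp p) F -> in_star (Fp j) F -> Qp \in Qs p -> is_kernel (Qs j) (Qp :\: F).
Proof.
move=> [consistent _] wp wj QpQ; apply/forallP => Q; apply/implyP => QQ.
have /subsetPn [y] := consistent p j Qp Q F QpQ QQ wp wj.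
by rewrite inE => /andP [yQp yQ] yF; apply/set0Pn; exists y; rewrite !inE yF yQp yQ.
Qed.

Variable i : P.
Hypothesis Gi : in_Gmax Fp Qs F i.

Lemma Gmax_correct : correct F i.
Proof. by case: Gi => G [hG iG]; case: (hG i iG) => [[]]. Qed.

Lemma Gmax_wise : in_star (Fp i) F.
Proof. by case: Gi => G [hG iG]; case: (hG i iG) => [[]]. Qed.

Lemma Gmax_quorum : exists2 Q, Q \in Qs i & forall j, j \in Q -> in_Gmax Fp Qs F j.
Proof.
case: Gi => G [hG iG]; case: (hG i iG) => _ /existsP [Q /andP [QQ QG]].
by exists Q => // j jQ; exists G; split => //; apply: (subsetP QG).
Qed.

End MaximalGuild.

Section Steps.
Context {P : finType} {V : eqType}.
Implicit Types (s : lstate P V) (e : event P V).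

Lemma In_bcast (m : msg P V) k : In (k, m) (bcast m).
Proof. by apply/in_map_iff; exists k; split => //; apply: In_of_mem; rewrite mem_enum. Qed.

Lemma In_bcast_inv (m m' : msg P V) k : In (k, m') (bcast m) -> m' = m.
Proof. by move=> /in_map_iff [k' [[_ ->]] _]. Qed.

Ltac case_step s e :=
  case: s => pr S0 T0 U0 [] d3 d5 d6 d7 dl pDS pDT aF rF cF dF;
  case: e => [i0|i0 j0 m0|i0 j0 n0 [S1| | | |T1]|i0 [|j1 t1|||||j1 t1|]|] /=.

Lemma Sset_step s e : Sset (step s e).1 = if e is EArbDel _ _ m then m :: Sset s else Sset s.
Proof. by case_step s e. Qed.

(* [set0] for the DistributeS/T messages, whose senders are not recorded. *)
Definition tally (m : msg P V) s : {set P} :=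
  match m with
  | MAck => ackFrom s | MReady => readyFrom s | MConfirm => confFrom s | _ => set0
  end.

Definition tallied (m : msg P V) : bool :=
  match m with MAck | MReady | MConfirm => true | _ => false end.

Lemma tally_step_subset m s e : tally m s \subset tally m (step s e).1.
Proof. by case: m; case_step s e; rewrite ?subsetUr. Qed.

Lemma tally_stepP m s e y : y \in tally m (step s e).1 ->
  y \in tally m s \/ exists k t0, e = ERecv k y t0 m.
Proof.
by case: m; case_step s e; rewrite ?in_setU1 => //; try (by left);
  case/orP => [/eqP->|]; eauto.
Qed.

Lemma tally_recv m s k j t0 : tallied m -> j \in tally m (step s (ERecv k j t0 m)).1.
Proof. by case: m => //= _; case: s => * /=; rewrite setU11. Qed.

Definition pending (j : P) (t0 : nat) s : bool := has (fun y => y.1 == (j, t0)) (pendDS s).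

Lemma find_pend_some j t0 s : pending j t0 s ->
  exists2 S, find_pend j t0 (pendDS s) = Some S & (j, t0, S) \in pendDS s.
Proof.
rewrite /pending /find_pend; elim: (pendDS s) => //= y pd IH.
case: ifP => [/eqP yjt _ | _ /IH [S -> Spd]]; last by exists S; rewrite // inE Spd orbT.
by exists y.2; rewrite // inE -yjt -surjective_pairing eqxx.
Qed.

Lemma pendDS_stepP s e y : y \in pendDS (step s e).1 ->
  y \in pendDS s \/ exists k, e = ERecv k y.1.1 y.1.2 (MDS y.2).
Proof.
case_step s e; rewrite ?inE ?mem_filter; try (by left); try (by case/andP; left).
all: by case/orP => [/eqP->|]; eauto.
Qed.

Lemma pending_recv s k j t0 S : pending j t0 (step s (ERecv k j t0 (MDS S))).1.
Proof. by case: s => * ; rewrite /pending /= eqxx. Qed.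

Definition raised_only_by (g : lstate P V -> bool) (a : act P) : Prop :=
  forall s e, g (step s e).1 -> g s \/ exists j, e = EAct V j a.

Lemma pending_removed_only_by_A4 j t0 :
  raised_only_by (fun s => ~~ pending j t0 s) (A4 j t0).
Proof.
move=> s e; case pjt: (pending j t0 s); last by left.
move: pjt; rewrite /pending; case_step s e => jt; rewrite /= ?jt ?orbT //.
all: case: (eqVneq (j1, t1) (j, t0)) => [[-> ->] _|ne]; first by right; eauto.
all: case/negP; move: jt => /hasP [y yin /eqP yjt]; apply/hasP; exists y; rewrite ?yjt //.
all: by rewrite mem_filter yin yjt eq_sym ne.
Qed.

Lemma sentT_raised : raised_only_by (@sentT P V) (A8 P).
Proof. by move=> s e; case_step s e; eauto. Qed.
Lemma done3_raised : raised_only_by (@done3 P V) (A3 P).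
Proof. by move=> s e; case_step s e; eauto. Qed.
Lemma done5_raised : raised_only_by (@done5 P V) (A5 P).
Proof. by move=> s e; case_step s e; eauto. Qed.
Lemma done6_raised : raised_only_by (@done6 P V) (A6 P).
Proof. by move=> s e; case_step s e; eauto. Qed.
Lemma done7_raised : raised_only_by (@done7 P V) (A7 P).
Proof. by move=> s e; case_step s e; eauto. Qed.

Lemma step_DS_unique s e k k' S S' :
  In (k, MDS S) (step s e).2 -> In (k', MDS S') (step s e).2 -> S = S'.
Proof.
case_step s e => //; try by case=> // -[].
all: by move=> /In_bcast_inv h /In_bcast_inv h'; congruence.
Qed.

Lemma step_confirm_bcast s e p k :
  In (p, MConfirm P V) (step s e).2 -> In (k, MConfirm P V) (step s e).2.
Proof.
case_step s e => //; try by case=> // -[].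
all: by move=> /In_bcast_inv h; try discriminate h; apply: In_bcast.
Qed.

Lemma step_A4_ack s k j t0 :
  ~~ sentT s -> In (j, MAck P V) (step s (EAct V k (A4 j t0))).2.
Proof. by case: s => ? ? ? ? [] * //=; left. Qed.

End Steps.

Section Execution.
Variables (P : finType) (V : eqType) (Fp Qs : P -> {set {set P}}) (F : {set P})
  (x : P -> V) (ev : nat -> event P V) (cfg : nat -> P -> lstate P V).
Hypothesis Hex : AG_execution Fp Qs F x ev cfg.

Local Notation out := (out ev cfg).

Lemma cfg_succ t i : correct F i ->
  [/\ ev_proc (ev t) = Some i, allowed Qs F ev cfg t i
     & cfg t.+1 i = (step (cfg t i) (ev t)).1]
  \/ ev_proc (ev t) <> Some i /\ cfg t.+1 i = cfg t i.
Proof.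
move=> ci; case: (ev_proc (ev t) =P Some i) => h.
  by left; have [? ?] := ex_step Hex ci h.
by right; split; last exact: (ex_idle Hex ci h).
Qed.

Lemma act_enabled i t a : correct F i -> ev t = EAct V i a -> enabled (Qs i) (cfg t i) a.
Proof.
move=> ci e; have [] := ex_step Hex ci (_ : ev_proc (ev t) = Some i); first by rewrite e.
by rewrite /allowed e.
Qed.

Lemma cfg_invariant i (I : lstate P V -> Prop) : correct F i -> I (init_state P V) ->
  (forall t, ev_proc (ev t) = Some i -> allowed Qs F ev cfg t i -> I (cfg t i) ->
     I (step (cfg t i) (ev t)).1) ->
  forall t, I (cfg t i).
Proof.
move=> ci I0 Istep; elim=> [|t IH]; first by rewrite (ex_init Hex ci).
by case: (cfg_succ t ci) => [[ep al ->]|[_ ->]]; auto.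
Qed.

Lemma cfg_subset_mono (T : Type) (pT : predType T) (f : lstate P V -> pT) i t t' :
  correct F i -> (forall s e, {subset f s <= f (step s e).1}) -> t <= t' ->
  {subset f (cfg t i) <= f (cfg t' i)}.
Proof.
move=> ci f_step; elim: t' => [|t' IH]; first by rewrite leqn0 => /eqP->.
rewrite leq_eqVlt => /orP [/eqP->//|/IH sub] y /sub.
by case: (cfg_succ t' ci) => [[_ _ ->]|[_ ->]] //; apply: f_step.
Qed.

Lemma Sset_mono i t t' : correct F i -> t <= t' ->
  {subset Sset (cfg t i) <= Sset (cfg t' i)}.
Proof.
move=> ci; apply: cfg_subset_mono => // s e y ys.
by rewrite Sset_step; case: e => // *; rewrite inE ys orbT.
Qed.

Lemma tally_mono m i t t' : correct F i -> t <= t' ->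
  tally m (cfg t i) \subset tally m (cfg t' i).
Proof.
move=> ci le; apply/subsetP/(cfg_subset_mono (f := tally m)) => // s e.
exact/subsetP/tally_step_subset.
Qed.

Lemma raised_by_action i g a t t' : correct F i -> raised_only_by g a -> t <= t' ->
  ~~ g (cfg t i) -> g (cfg t' i) -> exists t'', ev t'' = EAct V i a.
Proof.
move=> ci ga /subnKC <-; elim: (t' - t) => [|n IH] gt; first by rewrite addn0 (negbTE gt).
rewrite addnS; case: (cfg_succ (t + n) ci) => [[ep _ ->]|[_ ->]]; last exact: IH.
case/ga => [|[j ej]]; first exact: IH.
by exists (t + n); move: ep; rewrite ej => -[<-].
Qed.

Lemma guarded_action_fires i a (g C : lstate P V -> bool) t : correct F i ->
  raised_only_by g a -> g (init_state P V) = false ->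
  (forall s, enabled (Qs i) s a = ~~ g s && C s) -> C (cfg t i) ->
  exists t', ev t' = EAct V i a.
Proof.
move=> ci ga g0 en Ct; case gt: (g (cfg t i)).
  by apply: (raised_by_action ci ga (leq0n t)) => //; rewrite (ex_init Hex ci) g0.
have en_t : enabled (Qs i) (cfg t i) a by rewrite en gt Ct.
by have [t' _ e] := ex_fair Hex ci en_t; exists t'.
Qed.

Lemma out_act i t a : ev t = EAct V i a -> out t i = (step (cfg t i) (EAct V i a)).2.
Proof. by move=> e; rewrite /Defs.out e /= eqxx. Qed.

Lemma out_bcast i t a (m : lstate P V -> msg P V) : ev t = EAct V i a ->
  (forall s, (step s (EAct V i a)).2 = bcast (m s)) -> forall k, In (k, m (cfg t i)) (out t i).
Proof. by move=> e step_a k; rewrite (out_act e) step_a; apply: In_bcast. Qed.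

Lemma out_confirm_bcast j t0 p k :
  In (p, MConfirm P V) (out t0 j) -> In (k, MConfirm P V) (out t0 j).
Proof. by rewrite /Defs.out; case: ifP => // _; apply: step_confirm_bcast. Qed.

Lemma out_DS_unique j t0 k k' S S' :
  In (k, MDS S) (out t0 j) -> In (k', MDS S') (out t0 j) -> S = S'.
Proof. by rewrite /Defs.out; case: ifP => // _; apply: step_DS_unique. Qed.

Lemma tally_recv_eventually m i j t0 : tallied m -> correct F i -> correct F j ->
  In (i, m) (out t0 j) -> exists t, j \in tally m (cfg t i).
Proof.
move=> mt ci cj sent; have [t et] := ex_net Hex cj ci sent.
exists t.+1; case: (cfg_succ t ci) => [[_ _ ->]|[]]; rewrite et //.
exact: tally_recv.
Qed.

Lemma tally_eventually_subset m i (Q : {set P}) : tallied m -> correct F i ->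
  (forall j, j \in Q -> correct F j /\ exists t0, In (i, m) (out t0 j)) ->
  exists t, Q \subset tally m (cfg t i).
Proof.
move=> mt ci sentQ.
have tally_mono_in t t' j : t <= t' -> j \in tally m (cfg t i) -> j \in tally m (cfg t' i).
  by move=> le; apply/subsetP/tally_mono.
have [t Qt] : exists t, forall j, j \in enum Q -> j \in tally m (cfg t i).
  apply: eventually_all tally_mono_in _ => j; rewrite mem_enum => /sentQ [cj [t0]].
  exact: tally_recv_eventually.
by exists t; apply/subsetP => j jQ; apply: Qt; rewrite mem_enum.
Qed.

Lemma tally_sent m i j t : correct F i -> correct F j ->
  j \in tally m (cfg t i) -> exists t0, In (i, m) (out t0 j).
Proof.
move=> ci cj; move: t.
apply: (cfg_invariant (I := fun s => j \in tally m s -> _)) => // [|t _ al IH].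
  by case: m => //=; rewrite inE.
case/tally_stepP => [//|[k [t0 e]]].
by move: al; rewrite /allowed e => -[jF|[_ sent]]; [case/negP: cj | exists t0].
Qed.

Lemma Sset_arb_del i t j y : correct F i -> arb_del ev t i j y -> y \in Sset (cfg t.+1 i).
Proof.
move=> ci e; case: (cfg_succ t ci) => [[_ _ ->]|[]]; rewrite e //.
by rewrite Sset_step mem_head.
Qed.

Lemma Sset_arb_delivered i t y : correct F i ->
  y \in Sset (cfg t i) -> exists t' j, arb_del ev t' i j y.
Proof.
move=> ci; move: t.
apply: (cfg_invariant (I := fun s => y \in Sset s -> _)) => // t ep _ IH.
rewrite Sset_step; case E: (ev t) => [k|k j m|k j t0 m|k a|] yS; try exact: IH.
move: yS; rewrite inE => /orP [/eqP->|]; last exact: IH.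
by move: ep; rewrite E => -[<-]; exists t, j.
Qed.

Lemma pendDS_sent k j t0 S t : correct F k -> correct F j ->
  (j, t0, S) \in pendDS (cfg t k) -> In (k, MDS S) (out t0 j).
Proof.
move=> ck cj; move: t.
apply: (cfg_invariant (I := fun s => (j, t0, S) \in pendDS s -> _)) => // t _ al IH.
case/pendDS_stepP => [//|[k' e]]; move: al; rewrite /allowed e.
by case=> [jF|[_ sent]] //; case/negP: cj.
Qed.

Lemma A4_fires k j t0 S t : correct F k -> correct F j -> In (k, MDS S) (out t0 j) ->
  {subset S <= Sset (cfg t k)} -> exists t', ev t' = EAct V k (A4 j t0).
Proof.
move=> ck cj sent S_known; have [t1 e1] := ex_net Hex cj ck sent.
have pend1 : pending j t0 (cfg t1.+1 k).
  by case: (cfg_succ t1 ck) => [[_ _ ->]|[]]; rewrite e1 // pending_recv.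
set T := maxn t1.+1 t.
(* Only A4 removes the entry; while it is pending at time T, A4 is enabled. *)
case pendT: (pending j t0 (cfg T k)); last first.
  have removed := @pending_removed_only_by_A4 P V j t0.
  by apply: (raised_by_action ck removed (leq_maxl t1.+1 t)); rewrite ?pend1 ?pendT.
have [S' fS' S'pend] := find_pend_some pendT.
have S'S : S' = S by apply: out_DS_unique (pendDS_sent ck cj S'pend) sent.
have en : enabled (Qs k) (cfg T k) (A4 j t0).
  rewrite /= fS' S'S; apply/allP => y /S_known.
  exact: (Sset_mono ck (leq_maxr t1.+1 t)).
by have [t' _ e] := ex_fair Hex ck en; exists t'.
Qed.

Definition broadcasts (j : P) (m : msg P V) : Prop := exists t, forall k, In (k, m) (out t j).

Lemma act_broadcasts i t a (m : msg P V) : ev t = EAct V i a ->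
  (forall s, (step s (EAct V i a)).2 = bcast m) -> broadcasts i m.
Proof. by move=> e step_a; exists t; apply: (out_bcast (m := fun=> m) e). Qed.

Section WithGuild.
Hypothesis Hq : abqs Fp Qs.
Hypothesis Hg : has_guild Fp Qs F.
Local Notation Gmax := (in_Gmax Fp Qs F).

Lemma Gmax_tally_quorum m i : tallied m -> Gmax i ->
  (forall j, Gmax j -> exists t0, In (i, m) (out t0 j)) ->
  exists t, quorum_in (Qs i) (tally m (cfg t i)).
Proof.
move=> mt gi sent; have [Q QQ QG] := Gmax_quorum gi.
have [t Qt] : exists t, Q \subset tally m (cfg t i).
  apply: tally_eventually_subset mt (Gmax_correct gi) _ => j /QG gj.
  by split; [exact: Gmax_correct gj | exact: sent].
by exists t; apply/existsP; exists Q; rewrite QQ.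
Qed.

Lemma Gmax_hears_proposal i j : Gmax i -> Gmax j -> exists t, hasS j (Sset (cfg t i)).
Proof.
move=> gi gj; have [valid _] := ex_arb Hex Hg.
have [tj ej] := ex_propose Hex (Gmax_correct gj).
have [t del] := valid tj j (j, x j) i (Gmax_correct gj) (conj ej erefl) gi.
by exists t.+1; apply/hasP; exists (j, x j); first exact: Sset_arb_del (Gmax_correct gi) del.
Qed.

Lemma Gmax_Sset_spread i k t y : Gmax i -> Gmax k ->
  y \in Sset (cfg t i) -> exists t', y \in Sset (cfg t' k).
Proof.
move=> gi gk /(Sset_arb_delivered (Gmax_correct gi)) [t' [j del_i]].
have [_ [agree [total _]]] := ex_arb Hex Hg.
have [t'' [y' del_k]] := total t' i j y k gi del_i gk.
rewrite (agree t' t'' i k j y y' gi gk del_i del_k).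
by exists t''.+1; apply: Sset_arb_del (Gmax_correct gk) del_k.
Qed.

Lemma Gmax_A3_fires i : Gmax i -> exists t, ev t = EAct V i (A3 P).
Proof.
move=> gi; have ci := Gmax_correct gi; have [Q QQ QG] := Gmax_quorum gi.
have hasS_mono t t' j : t <= t' -> hasS j (Sset (cfg t i)) -> hasS j (Sset (cfg t' i)).
  by move=> le /hasP [y /(Sset_mono ci le) y_in yj]; apply/hasP; exists y.
have [t Qt] : exists t, forall j, j \in enum Q -> hasS j (Sset (cfg t i)).
  apply: eventually_all hasS_mono _ => j; rewrite mem_enum => /QG.
  exact: Gmax_hears_proposal.
pose C (s : lstate P V) := [exists Q in Qs i, [forall j in Q, hasS j (Sset s)]].
have Ct : C (cfg t i).
  apply/existsP; exists Q; rewrite QQ; apply/forallP => j; apply/implyP => jQ.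
  by apply: Qt; rewrite mem_enum.
exact: guarded_action_fires ci done3_raised erefl (fun=> erefl) Ct.
Qed.

Section NoGmaxDistributeT.
Hypothesis no_A8 : forall p t, Gmax p -> ev t <> EAct V p (A8 P).

Lemma Gmax_acks i : Gmax i -> forall k, Gmax k -> exists t, In (i, MAck P V) (out t k).
Proof.
move=> gi k gk; have ci := Gmax_correct gi; have ck := Gmax_correct gk.
have [t0 e0] := Gmax_A3_fires gi; set S0 := Sset (cfg t0 i).
have sent : In (k, MDS S0) (out t0 i).
  by apply: (out_bcast (m := fun s => MDS (Sset s)) e0); case.
have [t S0_known] : exists t, forall y, y \in S0 -> y \in Sset (cfg t k).
  apply: eventually_all (fun t t' y le => @Sset_mono k t t' ck le y) _ => y.
  exact: Gmax_Sset_spread gi gk.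
have [t' e'] := A4_fires ck ci sent S0_known.
exists t'; rewrite (out_act e'); apply: step_A4_ack; apply/negP => sentT_k.
have sentT0 : ~~ sentT (cfg 0 k) by rewrite (ex_init Hex ck).
have [t'' e''] := raised_by_action ck sentT_raised (leq0n t') sentT0 sentT_k.
exact: no_A8 gk e''.
Qed.

Lemma Gmax_A5_fires i : Gmax i -> exists t, ev t = EAct V i (A5 P).
Proof.
move=> gi; have [t acks] := Gmax_tally_quorum (m := MAck P V) erefl gi (Gmax_acks gi).
exact: guarded_action_fires (Gmax_correct gi) done5_raised erefl (fun=> erefl) acks.
Qed.

Lemma Gmax_A6_fires i : Gmax i -> exists t, ev t = EAct V i (A6 P).
Proof.
move=> gi; have [t readies] : exists t, quorum_in (Qs i) (tally (MReady P V) (cfg t i)).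
  apply: Gmax_tally_quorum gi _ => // j /Gmax_A5_fires [t e]; exists t.
  by apply: (out_bcast (m := fun=> MReady P V) e); case.
exact: guarded_action_fires (Gmax_correct gi) done6_raised erefl (fun=> erefl) readies.
Qed.

End NoGmaxDistributeT.

Lemma Gmax_confirms_of_A8 p tp j : Gmax p -> ev tp = EAct V p (A8 P) -> Gmax j ->
  broadcasts j (MConfirm P V).
Proof.
move=> gp ep gj; have cp := Gmax_correct gp; have cj := Gmax_correct gj.
have /andP [_ /existsP [Qp /andP [QpQ Qp_conf]]] := act_enabled cp ep.
have [t K_conf] : exists t, Qp :\: F \subset tally (MConfirm P V) (cfg t j).
  apply: tally_eventually_subset => // y; rewrite inE => /andP [yF yQp]; split => //.
  have [t0 sent] := tally_sent (m := MConfirm P V) cp yF (subsetP Qp_conf y yQp).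
  by exists t0; apply: out_confirm_bcast sent.
have kernel : kernel_in (Qs j) (confFrom (cfg t j)).
  apply/existsP; exists (Qp :\: F); rewrite K_conf andbT.
  exact: quorum_diff_faulty_kernel Hq (Gmax_wise gp) (Gmax_wise gj) QpQ.
have [t' e] := guarded_action_fires cj done7_raised erefl (fun=> erefl) kernel.
by apply: (act_broadcasts e); case.
Qed.

Lemma Gmax_confirms j : Gmax j -> broadcasts j (MConfirm P V).
Proof.
case: (classic (exists p t, Gmax p /\ ev t = EAct V p (A8 P))) => [[p [t [gp ep]]]|no_A8].
  exact: Gmax_confirms_of_A8 gp ep.
move=> /Gmax_A6_fires [|t e]; last by apply: (act_broadcasts e); case.
by move=> p t gp ep; apply: no_A8; exists p, t.
Qed.

Lemma Gmax_A8_fires i : Gmax i -> exists t, ev t = EAct V i (A8 P).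
Proof.
move=> gi; have [t confs] : exists t, quorum_in (Qs i) (tally (MConfirm P V) (cfg t i)).
  by apply: Gmax_tally_quorum gi _ => // j /Gmax_confirms [t0 sent]; exists t0.
exact: guarded_action_fires (Gmax_correct gi) sentT_raised erefl (fun=> erefl) confs.
Qed.

End WithGuild.
End Execution.

Theorem lemma3p6 (P : finType) (V : eqType) (Fp Qs : P -> {set {set P}})
  (F : {set P}) (x : P -> V) (ev : nat -> event P V) (cfg : nat -> P -> lstate P V) :
  abqs Fp Qs ->
  AG_execution Fp Qs F x ev cfg ->
  has_guild Fp Qs F ->
  forall i, in_Gmax Fp Qs F i ->
  exists t k T, In (k, MDT T) (out ev cfg t i).
Proof.
move=> Hq Hex Hg i gi; have [t e] := Gmax_A8_fires Hex Hq Hg gi.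
exists t, i, (Tset (cfg t i)).
by apply: (out_bcast cfg (m := fun s => MDT (Tset s)) e); case.
Qed.
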